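(* As formal power series in $y$, \[ \sum_{n\ge0}R_n(x)y^n=\frac{1+y+x^3y^3-xy^4}{1-(1+x+x^2)y^2+x^2y^4}+xy . \]
   Context: For $n\ge1$ let $\Xi_n$ be the poset on $\{x_1,\dots,x_n\}$ whose cover relations are exactly: $x_2\prec x_1$, $x_3\prec x_2$, and for $3\le i\le n-1$, $x_i\prec x_{i+1}$ if $i$ is odd and $x_{i+1}\prec x_i$ if $i$ is even (so $x_1>x_2>x_3<x_4>x_5<\cdots$). A filter of a poset is an up-closed subset. $\Omega_n$ is the lattice of filters of $\Xi_n$ under reverse inclusion; $\Omega_0$ is the one-element lattice. $R_n(x)=\sum_{F\in\Omega_n}x^{\,n-|F|}$ is the rank generating function of $\Omega_n$, with $R_0(x)=1$. *)

From HB Require Import structures.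
From mathcomp Require Import all_boot all_order all_algebra.
Set Implicit Arguments. Unset Strict Implicit. Unset Printing Implicit Defensive.
Import GRing.Theory.
Local Open Scope ring_scope.

(* The element x_(a+1) of Xi_n is represented by a : 'I_n (0-indexed). *)

(* xi_cover n a b  <=>  x_(a+1) is covered by x_(b+1) in Xi_n, i.e.
   x_(a+1) \prec x_(b+1), using the cover relations of the paper:
   x_2 < x_1, x_3 < x_2, and for 3 <= i <= n-1:
   x_i < x_(i+1) if i odd, x_(i+1) < x_i if i even. *)
Definition xi_cover (n : nat) : rel 'I_n := fun a b =>
  let l := (val a).+1 in let u := (val b).+1 in
  [|| (l == 2) && (u == 1)%N,
      (l == 3) && (u == 2)%N,
      [&& (3 <= l)%N, odd l & u == l.+1]
    | [&& (3 <= u)%N, ~~ odd u & l == u.+1]].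

Definition xi_le (n : nat) (a b : 'I_n) : bool := connect (@xi_cover n) a b.

Definition is_filter (n : nat) (F : {set 'I_n}) : bool :=
  [forall a, forall b, (a \in F) && xi_le a b ==> (b \in F)].

Definition R (n : nat) : {poly int} :=
  \sum_(F : {set 'I_n} | is_filter F) 'X^(n - #|F|).

(* Formal power series in y with coefficients in Z[x], as coefficient
   sequences, with the Cauchy product. *)
Definition fps := nat -> {poly int}.
Definition fps_mul (f g : fps) : fps :=
  fun n => \sum_(k < n.+1) f k * g (n - k)%N.

Definition numer : fps := fun n =>
  match n with
  | 0 => 1 | 1 => 1 | 3 => 'X^3 | 4 => - 'X | _ => 0
  end.

Definition denom : fps := fun n =>
  match n with
  | 0 => 1 | 2 => - (1 + 'X + 'X^2) | 4 => 'X^2 | _ => 0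
  end.

Definition xy : fps := fun n => if n == 1%N then 'X else 0.

Definition Rser : fps := fun n => R n.

(* Build Xi_(n+2) from Xi_(n+1) by adjoining x_(n+2), which is related only
   to x_(n+1).  A filter of Xi_(n+2) is then a filter of Xi_(n+1) together
   with a choice for x_(n+2), constrained only by whether x_(n+1) is in the
   filter.  Tracking the pair (rank generating function of the filters
   containing x_(n+1), of those omitting it) turns the count into a product
   of 2x2 transfer matrices [[1,0],[x,x]] (x_(n+2) below x_(n+1)) and
   [[1,1],[0,x]] (x_(n+2) above x_(n+1)), which alternate from n = 2 on.
   The product of two consecutive ones has trace 1+x+x^2 and determinant x^2,
   so by Cayley-Hamilton R_(n+6) = (1+x+x^2) R_(n+4) - x^2 R_(n+2): this is
   the denominator, and the numerator comes from R_0, ..., R_5. *)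

From Stdlib Require Import FunctionalExtensionality.
From mathcomp Require Import all_boot all_order all_algebra ring zify.
Set Implicit Arguments. Unset Strict Implicit. Unset Printing Implicit Defensive.
Import GRing.Theory.
Local Open Scope ring_scope.

Lemma connect_upclosedE (T : finType) (e : rel T) (A : {set T}) :
  [forall a, forall b, (a \in A) && connect e a b ==> (b \in A)] =
  [forall a, forall b, e a b ==> (a \in A) ==> (b \in A)].
Proof.
apply/forallP/forallP => [closed a | closed a]; apply/forallP => b.
  apply/implyP => eab; apply/implyP => Aa.
  by have /forallP/(_ b) := closed a; rewrite Aa connect1.
apply/implyP => /andP[Aa /connectP[p ep ->]].
elim: p a Aa ep => [//|c p IHp] a Aa /= /andP[eac ep].
by apply: IHp ep; have /forallP/(_ c) := closed a; rewrite eac Aa.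
Qed.

Definition xi_cov (l u : nat) : bool :=
  [|| (l == 2) && (u == 1),
      (l == 3) && (u == 2),
      [&& 3 <= l, odd l & u == l.+1]
    | [&& 3 <= u, ~~ odd u & l == u.+1]]%N.

Lemma xi_coverE n (a b : 'I_n) : xi_cover a b = xi_cov (val a).+1 (val b).+1.
Proof. by []. Qed.

Lemma xi_cov_adjacent l u : xi_cov l u -> u = l.+1 \/ l = u.+1.
Proof.
by case/or4P => [/andP[/eqP-> /eqP->]|/andP[/eqP-> /eqP->]|/and3P[_ _ /eqP->]
                |/and3P[_ _ /eqP->]]; auto.
Qed.

Definition xi_down (n : nat) : bool := if n is 0 then true else odd n.

Lemma xi_cov_down n : xi_cov n.+2 n.+1 = xi_down n.
Proof. by rewrite /xi_cov; case: n => [|[|n]] //=; rewrite !eqSS; lia. Qed.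

Lemma xi_cov_up n : xi_cov n.+1 n.+2 = ~~ xi_down n.
Proof. by rewrite /xi_cov; case: n => [|[|n]] //=; rewrite !eqSS; lia. Qed.

Definition cover_closed n (F : {set 'I_n}) : bool :=
  [forall a, forall b, xi_cover a b ==> (a \in F) ==> (b \in F)].

Lemma is_filterE n (F : {set 'I_n}) : is_filter F = cover_closed F.
Proof. exact: connect_upclosedE. Qed.

Definition extend n (F : {set 'I_n}) (b : bool) : {set 'I_n.+1} :=
  [set i | if unlift ord_max i is Some j then j \in F else b].

Lemma in_extend_max n (F : {set 'I_n}) b : (ord_max \in extend F b) = b.
Proof. by rewrite inE unlift_none. Qed.

Lemma in_extend_lift n (F : {set 'I_n}) b j :
  (lift ord_max j \in extend F b) = (j \in F).
Proof. by rewrite inE liftK. Qed.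

Lemma card_extend n (F : {set 'I_n}) b : #|extend F b| = (b + #|F|)%N.
Proof.
rewrite (cardsD1 ord_max) in_extend_max; congr (_ + _)%N.
rewrite -(card_imset F (@lift_inj _ ord_max)).
suff -> : extend F b :\ ord_max = [set lift ord_max j | j in F] by [].
apply/setP => i; rewrite !inE; case: (unliftP ord_max i) => [j ->|->].
  by rewrite (mem_imset _ _ (@lift_inj _ ord_max)) eq_sym neq_lift.
by rewrite eqxx; apply/esym/imsetP => -[j _ /eqP]; rewrite (negbTE (neq_lift _ _)).
Qed.

Lemma big_set_ordS (T : Type) (idx : T) (op : Monoid.com_law idx) n
    (P : pred {set 'I_n.+1}) (f : {set 'I_n.+1} -> T) :
  \big[op/idx]_(G | P G) f G =
  \big[op/idx]_(F : {set 'I_n})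
     \big[op/idx]_(b : bool | P (extend F b)) f (extend F b).
Proof.
rewrite pair_big_dep /= (reindex (fun p : {set 'I_n} * bool => extend p.1 p.2)) //=.
exists (fun G : {set 'I_n.+1} =>
  ([set j | lift ord_max j \in G], ord_max \in G)).
  move=> [F b] _ /=; rewrite in_extend_max; congr (_, _); apply/setP => j.
  by rewrite inE in_extend_lift.
move=> G _ /=; apply/setP => i; case: (unliftP ord_max i) => [j ->|->].
  by rewrite in_extend_lift inE.
by rewrite in_extend_max.
Qed.

Lemma is_filter_extend n (F : {set 'I_n.+1}) b :
  is_filter (extend F b) = [&& is_filter F,
    ~~ xi_down n ==> (ord_max \in F) ==> b & xi_down n ==> b ==> (ord_max \in F)].
Proof.
rewrite !is_filterE -xi_cov_up -xi_cov_down.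
have val_lift_max (j : 'I_n.+1) : val (lift ord_max j) = val j by exact: lift_max.
apply/idP/idP => [closed | /and3P[closedF up down]].
  have closed_at a a' := implyP (forallP (forallP closed a) a').
  apply/and3P; split.
  - apply/forallP => a; apply/forallP => a'; apply/implyP => aa'.
    have := closed_at (lift ord_max a) (lift ord_max a').
    by rewrite !in_extend_lift xi_coverE !val_lift_max -xi_coverE; apply.
  - have := closed_at (lift ord_max ord_max) ord_max.
    by rewrite in_extend_lift in_extend_max xi_coverE val_lift_max /= => ?; apply/implyP.
  - have := closed_at ord_max (lift ord_max ord_max).
    by rewrite in_extend_lift in_extend_max xi_coverE val_lift_max /= => ?; apply/implyP.
apply/forallP => a; apply/forallP => a'; apply/implyP; rewrite xi_coverE.
have at_top (j : 'I_n.+1) : xi_cov j.+1 n.+2 || xi_cov n.+2 j.+1 -> j = ord_max.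
  move=> jk; apply/val_inj => /=; have := ltn_ord j.
  by case/orP: jk => /xi_cov_adjacent[] /=; lia.
case: (unliftP ord_max a) => [j ->|->]; case: (unliftP ord_max a') => [j' ->|->];
  rewrite ?val_lift_max ?in_extend_lift ?in_extend_max //=.
- by rewrite -xi_coverE; apply: (implyP (forallP (forallP closedF j) j')).
- move=> jn; have top_j : j = ord_max by apply: at_top; rewrite jn.
  by move: jn; rewrite top_j /= => /(implyP up).
- move=> nj; have top_j' : j' = ord_max by apply: at_top; rewrite nj orbT.
  by move: nj; rewrite top_j' /= => /(implyP down).
- by move=> _; apply/implyP.
Qed.

Definition top_filter_sum n (g : bool -> {poly int}) : {poly int} :=
  \sum_(F : {set 'I_n.+1} | is_filter F) 'X^(n.+1 - #|F|) * g (ord_max \in F).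

Definition weight (b : bool) : {poly int} := if b then 1 else 'X.

Lemma expX_extend n (F : {set 'I_n}) b :
  'X^(n.+1 - #|extend F b|) = 'X^(n - #|F|) * weight b :> {poly int}.
Proof.
have := max_card F; rewrite card_ord card_extend => cardF.
case: b => /=; first by rewrite add1n subSS mulr1.
by rewrite add0n subSn // exprS mulrC.
Qed.

Lemma top_filter_sumS n g :
  top_filter_sum n.+1 g = top_filter_sum n (fun c =>
    \sum_(b : bool | (~~ xi_down n ==> c ==> b) && (xi_down n ==> b ==> c))
       weight b * g b).
Proof.
rewrite /top_filter_sum big_set_ordS big_mkcond [RHS]big_mkcond /=.
apply: eq_bigr => F _; rewrite big_distrr /=.
case: (boolP (is_filter F)) => filterF /=.
  apply: eq_big => [b|b _]; first by rewrite is_filter_extend filterF.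
  by rewrite expX_extend in_extend_max mulrA.
by rewrite big1 // => b; rewrite is_filter_extend (negbTE filterF).
Qed.

Lemma top_filter_sum0 g : top_filter_sum 0 g = g true + 'X * g false.
Proof.
have closed1 (G : {set 'I_1}) : cover_closed G.
  by apply/forallP => -[[|//] ?]; apply/forallP => -[[|//] ?].
rewrite /top_filter_sum big_set_ordS (big_pred1 set0) => [|F]; last first.
  by apply/esym/eqP/setP => -[].
rewrite big_mkcond big_bool !is_filterE !closed1 /=.
by rewrite !card_extend cards0 !in_extend_max /= expr0 expr1 mul1r.
Qed.

Definition rank_step n (p : {poly int} * {poly int}) :
  {poly int} * {poly int} :=
  if xi_down n then (p.1, 'X * (p.1 + p.2)) else (p.1 + p.2, 'X * p.2).

(* [(rank_pair n).1] and [(rank_pair n).2] are the rank generating functions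
   of the filters of Xi_(n+1) containing, resp. omitting, x_(n+1). *)
Fixpoint rank_pair n : {poly int} * {poly int} :=
  if n is m.+1 then rank_step m (rank_pair m) else (1, 'X).

Lemma top_filter_sumE n g :
  top_filter_sum n g = (rank_pair n).1 * g true + (rank_pair n).2 * g false.
Proof.
elim: n g => [|n IHn] g; first by rewrite top_filter_sum0 mul1r.
rewrite top_filter_sumS IHn /= /rank_step /weight.
by case: (xi_down n); do 2 rewrite big_mkcond big_bool /=; ring.
Qed.

Lemma R0 : R 0 = 1.
Proof.
have closed0 : cover_closed (set0 : {set 'I_0}) by apply/forallP => -[].
rewrite /R (big_pred1 set0) => [|F]; first by rewrite cards0 expr0.
have -> : F = set0 by apply/setP => -[].
by rewrite is_filterE closed0 /= eqxx.
Qed.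

Lemma R_rank_pair n : R n.+1 = (rank_pair n).1 + (rank_pair n).2.
Proof.
have := top_filter_sumE n (fun _ => 1); rewrite !mulr1 => <-.
by apply: eq_bigr => F _; rewrite mulr1.
Qed.

Lemma R_rec n : R n.+4.+2 = (1 + 'X + 'X^2) * R n.+4 - 'X^2 * R n.+2.
Proof.
rewrite !R_rank_pair /=; case: (rank_pair n.+1) => a b; rewrite /rank_step /=.
by case: (odd n) => /=; ring.
Qed.

Lemma fps_mul_denomSSSS f n :
  fps_mul denom f n.+4 = f n.+4 - (1 + 'X + 'X^2) * f n.+2 + 'X^2 * f n.
Proof.
rewrite /fps_mul -(big_mkord xpredT (fun k => denom k * f (n.+4 - k)%N)).
do 5 rewrite big_ltn //.
rewrite big_nat_cond big1 => [|k /andP[/andP[k_ge5 _] _]]; last first.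
  by case: k k_ge5 => [|[|[|[|[|k]]]]] // _; rewrite mul0r.
rewrite !subSS !subn0 /=; ring.
Qed.

Theorem mainTheorem6 :
  fps_mul denom (fun n => Rser n - xy n) = numer.
Proof.
apply: functional_extensionality => -[|[|[|[|[|[|n]]]]]].
7: by rewrite fps_mul_denomSSSS /Rser /xy R_rec /=; ring.
1-4: rewrite /fps_mul !big_ord_recl big_ord0 /Rser /xy /bump /= ?mul0r ?subn0.
5,6: rewrite fps_mul_denomSSSS /Rser /xy.
all: by rewrite ?R0 ?R_rank_pair /= /rank_step /=; ring.
Qed.
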